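(* Let $X$ be a compact metric space and $f\colon X\to X$ an expansive homeomorphism with the shadowing property. Then $f$ has the L-shadowing property.
   Context: $f$ is expansive if there is $c>0$ such that for all $x\neq y$ there is $k\in\mathbb{Z}$ with $d(f^k(x),f^k(y))>c$. A $\delta$-pseudo orbit is $(x_k)_{k\in\mathbb{Z}}$ with $d(f(x_k),x_{k+1})<\delta$ for all $k$; a two-sided limit pseudo orbit satisfies $d(f(x_k),x_{k+1})\to0$ as $|k|\to\infty$. $z$ $\varepsilon$-shadows $(x_k)$ if $d(f^k(z),x_k)<\varepsilon$ for all $k$, and two-sided limit shadows it if $d(f^k(z),x_k)\to0$ as $|k|\to\infty$. $f$ has the shadowing property if for every $\varepsilon>0$ there is $\delta>0$ such that every $\delta$-pseudo orbit is $\varepsilon$-shadowed. $f$ has the L-shadowing property if for every $\varepsilon>0$ there is $\delta>0$ such that every $\delta$-pseudo orbit that is also a two-sided limit pseudo orbit is both $\varepsilon$-shadowed and two-sided limit shadowed by one and the same point. *)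

From Stdlib Require Import Reals ZArith List.
Open Scope R_scope.

Record metric_space (X : Type) (d : X -> X -> R) : Prop := {
  ms_nonneg : forall x y, 0 <= d x y;
  ms_sep    : forall x y, d x y = 0 <-> x = y;
  ms_sym    : forall x y, d x y = d y x;
  ms_tri    : forall x y z, d x z <= d x y + d y z
}.

Definition m_open {X : Type} (d : X -> X -> R) (U : X -> Prop) : Prop :=
  forall x, U x -> exists r, 0 < r /\ forall y, d x y < r -> U y.

Definition m_compact {X : Type} (d : X -> X -> R) : Prop :=
  forall (I : Type) (U : I -> X -> Prop),
    (forall i, m_open d (U i)) ->
    (forall x, exists i, U i x) ->
    exists l : list I, forall x, exists i, In i l /\ U i x.

Definition m_continuous {X : Type} (d : X -> X -> R) (f : X -> X) : Prop :=
  forall x eps, 0 < eps -> exists del, 0 < del /\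
    forall y, d x y < del -> d (f x) (f y) < eps.

Definition homeomorphism_with_inverse {X : Type} (d : X -> X -> R) (f g : X -> X) : Prop :=
  (forall x, g (f x) = x) /\ (forall x, f (g x) = x) /\
  m_continuous d f /\ m_continuous d g.

Definition iterZ {X : Type} (f g : X -> X) (k : Z) (x : X) : X :=
  match k with
  | Z0 => x
  | Zpos p => Nat.iter (Pos.to_nat p) f x
  | Zneg p => Nat.iter (Pos.to_nat p) g x
  end.

Section Dyn.
Context {X : Type} (d : X -> X -> R) (f g : X -> X).
Local Notation fk k := (iterZ f g k).

Definition expansive : Prop :=
  exists c, 0 < c /\ forall x y, x <> y -> exists k : Z, d (fk k x) (fk k y) > c.

Definition pseudo_orbit (delta : R) (xs : Z -> X) : Prop :=
  forall k : Z, d (f (xs k)) (xs (k + 1)%Z) < delta.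

Definition two_sided_limit_pseudo_orbit (xs : Z -> X) : Prop :=
  forall eps, 0 < eps -> exists N : Z, forall k : Z,
    (N <= Z.abs k)%Z -> d (f (xs k)) (xs (k + 1)%Z) < eps.

Definition eps_shadows (eps : R) (z : X) (xs : Z -> X) : Prop :=
  forall k : Z, d (fk k z) (xs k) < eps.

Definition limit_shadows (z : X) (xs : Z -> X) : Prop :=
  forall eps, 0 < eps -> exists N : Z, forall k : Z,
    (N <= Z.abs k)%Z -> d (fk k z) (xs k) < eps.

Definition shadowing_property : Prop :=
  forall eps, 0 < eps -> exists delta, 0 < delta /\
    forall xs, pseudo_orbit delta xs -> exists z, eps_shadows eps z xs.

Definition L_shadowing_property : Prop :=
  forall eps, 0 < eps -> exists delta, 0 < delta /\
    forall xs, pseudo_orbit delta xs -> two_sided_limit_pseudo_orbit xs ->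
      exists z, eps_shadows eps z xs /\ limit_shadows z xs.
End Dyn.

(* Let c be an expansivity constant and let z shadow the pseudo-orbit (x_k) at
   scale min(eps, c/2).  By compactness expansivity is uniform: for every eta
   there is M such that two orbits which stay c-close during the times
   [-M, M] are eta-close at time 0.  Far in the future the jumps of (x_k) are
   below any delta', so replacing its past by the true orbit of one of its
   points gives a delta'-pseudo-orbit, shadowed at scale min(eta/2, c/2) by
   some w.  The orbits of z and w stay c-close on that tail, hence f^k z is
   eta-close to x_k for large k; the past is handled symmetrically. *)

From Stdlib Require Import Reals ZArith List.
From Stdlib Require Import Lra Lia Classical.
Open Scope R_scope.

Lemma eventually_inv_succ_lt (r : R) :
  0 < r -> exists n, forall n', (n <= n')%nat -> / (INR n' + 1) < r.
Proof.
  intros r_pos. destruct (archimed_cor1 r r_pos) as [n [Hn n_pos]].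
  exists n. intros n' Hn'.
  assert (0 < INR n) by (apply lt_0_INR; lia).
  apply le_INR in Hn'.
  apply Rle_lt_trans with (/ INR n); [apply Rinv_le_contravar; lra | exact Hn].
Qed.

Section ExpansiveShadowing.

Context {X : Type} (d : X -> X -> R) (f g : X -> X).
Hypothesis d_metric : metric_space X d.
Hypothesis d_compact : m_compact d.
Hypothesis g_f : forall x, g (f x) = x.
Hypothesis f_g : forall x, f (g x) = x.
Hypothesis f_cont : m_continuous d f.
Hypothesis g_cont : m_continuous d g.

Local Notation fk k := (iterZ f g k).

Lemma dist_refl x : d x x = 0.
Proof. apply (ms_sep _ _ d_metric). reflexivity. Qed.

Lemma iterZ_succ k x : fk (Z.succ k) x = f (fk k x).
Proof.
  destruct k as [|p|p].
  - reflexivity.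
  - simpl. rewrite Pos2Nat.inj_add, Nat.add_1_r. reflexivity.
  - destruct (Pos.succ_pred_or p) as [-> | <-].
    + symmetry. apply f_g.
    + replace (Z.succ (Z.neg (Pos.succ (Pos.pred p)))) with (Z.neg (Pos.pred p)) by lia.
      unfold iterZ. rewrite Pos2Nat.inj_succ. simpl. symmetry. apply f_g.
Qed.

Lemma iterZ_pred k x : fk (Z.pred k) x = g (fk k x).
Proof.
  replace k with (Z.succ (Z.pred k)) at 2 by lia.
  rewrite iterZ_succ, g_f. reflexivity.
Qed.

Lemma iterZ_add i j x : fk i (fk j x) = fk (i + j) x.
Proof.
  induction i as [|i IH|i IH] using Z.peano_ind.
  - reflexivity.
  - rewrite iterZ_succ, IH, <- iterZ_succ. f_equal. lia.
  - rewrite iterZ_pred, IH, <- iterZ_pred. f_equal. lia.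
Qed.

Lemma m_continuous_comp (h k : X -> X) :
  m_continuous d h -> m_continuous d k -> m_continuous d (fun x => h (k x)).
Proof.
  intros h_cont k_cont x eps eps_pos.
  destruct (h_cont (k x) eps eps_pos) as [r1 [r1_pos H1]].
  destruct (k_cont x r1 r1_pos) as [r2 [r2_pos H2]].
  exists r2. split; auto.
Qed.

Lemma iterZ_continuous k : m_continuous d (fk k).
Proof.
  induction k as [|k IH|k IH] using Z.peano_ind.
  - intros x eps eps_pos. exists eps. split; auto.
  - intros x eps eps_pos.
    destruct (m_continuous_comp f (fk k) f_cont IH x eps eps_pos) as [r [r_pos Hr]].
    exists r. split; auto. intros y Hy. rewrite !iterZ_succ. auto.
  - intros x eps eps_pos.
    destruct (m_continuous_comp g (fk k) g_cont IH x eps eps_pos) as [r [r_pos Hr]].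
    exists r. split; auto. intros y Hy. rewrite !iterZ_pred. auto.
Qed.

Lemma closures_of_decreasing_sets_meet (S : nat -> X -> Prop) :
  (forall n n' x, (n <= n')%nat -> S n' x -> S n x) ->
  (forall n, exists x, S n x) ->
  exists a, forall n r, 0 < r -> exists x, S n x /\ d a x < r.
Proof.
  intros S_decr S_nonempty. apply NNPP. intros no_meet.
  set (away n y := exists r, 0 < r /\ forall x, S n x -> r <= d y x).
  destruct (d_compact nat away) as [l Hl].
  - intros n y [r [r_pos Hr]]. exists (r / 2). split; [lra|].
    intros y' Hy'. exists (r / 2). split; [lra|].
    intros x Sx. specialize (Hr x Sx).
    pose proof (ms_tri _ _ d_metric y y' x). lra.
  - intros y. apply NNPP. intros not_away. apply no_meet. exists y.
    intros n r r_pos. apply NNPP. intros no_close. apply not_away.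
    exists n, r. split; auto. intros x Sx. apply Rnot_lt_le. intros Hlt.
    apply no_close. exists x. auto.
  - destruct (S_nonempty (list_max l)) as [x Sx].
    destruct (Hl x) as [i [Hi [r [r_pos Hr]]]].
    assert (i_le : (i <= list_max l)%nat).
    { pose proof (proj1 (list_max_le l (list_max l)) (le_n _)) as Hmax.
      rewrite Forall_forall in Hmax. auto. }
    specialize (Hr x (S_decr _ _ _ i_le Sx)). rewrite dist_refl in Hr. lra.
Qed.

(* Two successive applications of the previous lemma replace a compactness
   argument in X x X, and avoid choosing a convergent subsequence. *)
Lemma pair_cluster_point (P : nat -> X -> X -> Prop) :
  (forall m, exists x y, P m x y) ->
  exists a b, forall r n, 0 < r ->
    exists m x y, (n <= m)%nat /\ P m x y /\ d a x < r /\ d b y < r.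
Proof.
  intros P_nonempty.
  destruct (closures_of_decreasing_sets_meet
              (fun n x => exists m y, (n <= m)%nat /\ P m x y)) as [a Ha].
  - intros n n' x Hn [m [y [Hm Pm]]]. exists m, y. split; [lia | exact Pm].
  - intros n. destruct (P_nonempty n) as [x [y Pn]]. exists x, n, y. auto.
  - destruct (closures_of_decreasing_sets_meet
                (fun n y => exists m x,
                   (n <= m)%nat /\ P m x y /\ d a x < / (INR n + 1))) as [b Hb].
    + intros n n' y Hn [m [x [Hm [Pm Hax]]]]. exists m, x.
      split; [lia|]. split; [exact Pm|].
      eapply Rlt_le_trans; [exact Hax|]. apply Rinv_le_contravar.
      * pose proof (pos_INR n). lra.
      * apply le_INR in Hn. lra.
    + intros n.
      assert (inv_pos : 0 < / (INR n + 1)).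
      { apply Rinv_0_lt_compat. pose proof (pos_INR n). lra. }
      destruct (Ha n _ inv_pos) as [x [[m [y [Hm Pm]]] Hax]].
      exists y, m, x. auto.
    + exists a, b. intros r n r_pos.
      destruct (eventually_inv_succ_lt r r_pos) as [n0 Hn0].
      destruct (Hb (Nat.max n n0) r r_pos) as [y [[m [x [Hm [Pm Hax]]]] Hby]].
      exists m, x, y. split; [lia|]. split; [exact Pm|]. split; [|exact Hby].
      eapply Rlt_trans; [exact Hax|]. apply Hn0. lia.
Qed.

Lemma dist_le_of_approx (h : X -> X) (c : R) a b :
  m_continuous d h ->
  (forall r, 0 < r -> exists x y, d a x < r /\ d b y < r /\ d (h x) (h y) <= c) ->
  d (h a) (h b) <= c.
Proof.
  intros h_cont approx. apply Rnot_lt_le. intros Hlt.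
  set (gap := (d (h a) (h b) - c) / 2).
  assert (gap_pos : 0 < gap) by (unfold gap; lra).
  destruct (h_cont a gap gap_pos) as [ra [ra_pos Ha]].
  destruct (h_cont b gap gap_pos) as [rb [rb_pos Hb]].
  destruct (approx (Rmin ra rb)) as [x [y [Hax [Hby Hxy]]]].
  { apply Rmin_pos; assumption. }
  specialize (Ha x (Rlt_le_trans _ _ _ Hax (Rmin_l ra rb))).
  specialize (Hb y (Rlt_le_trans _ _ _ Hby (Rmin_r ra rb))).
  pose proof (ms_tri _ _ d_metric (h a) (h x) (h b)).
  pose proof (ms_tri _ _ d_metric (h x) (h y) (h b)).
  pose proof (ms_sym _ _ d_metric (h y) (h b)).
  unfold gap in *. lra.
Qed.

Lemma dist_ge_of_approx (eta : R) a b :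
  (forall r, 0 < r -> exists x y, d a x < r /\ d b y < r /\ eta <= d x y) ->
  eta <= d a b.
Proof.
  intros approx. apply Rnot_lt_le. intros Hlt.
  destruct (approx ((eta - d a b) / 2)) as [x [y [Hax [Hby Hxy]]]]; [lra|].
  pose proof (ms_tri _ _ d_metric x a y).
  pose proof (ms_tri _ _ d_metric a b y).
  pose proof (ms_sym _ _ d_metric x a). lra.
Qed.

Lemma expansive_uniform (c eta : R) :
  0 < eta ->
  (forall x y, x <> y -> exists k : Z, d (fk k x) (fk k y) > c) ->
  exists M : nat, forall a b,
    (forall i, (Z.abs i <= Z.of_nat M)%Z -> d (fk i a) (fk i b) <= c) ->
    d a b < eta.
Proof.
  intros eta_pos expansive_c. apply NNPP. intros no_M.
  destruct (pair_cluster_point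
              (fun M a b => (forall i, (Z.abs i <= Z.of_nat M)%Z ->
                               d (fk i a) (fk i b) <= c) /\ eta <= d a b))
    as [a [b Hab]].
  - intros M. apply NNPP. intros no_pair. apply no_M. exists M.
    intros a b close. apply Rnot_le_lt. intros far. apply no_pair.
    exists a, b. auto.
  - assert (far : eta <= d a b).
    { apply dist_ge_of_approx. intros r r_pos.
      destruct (Hab r 0%nat r_pos) as [m [x [y [_ [[_ Hxy] [Hax Hby]]]]]].
      exists x, y. auto. }
    assert (close : forall k, d (fk k a) (fk k b) <= c).
    { intros k. apply dist_le_of_approx; [apply iterZ_continuous|].
      intros r r_pos.
      destruct (Hab r (Z.to_nat (Z.abs k)) r_pos)
        as [m [x [y [Hm [[Hxy _] [Hax Hby]]]]]].
      exists x, y. split; [exact Hax|]. split; [exact Hby|]. apply Hxy. lia. }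
    assert (a_ne_b : a <> b).
    { intros <-. rewrite dist_refl in far. lra. }
    destruct (expansive_c a b a_ne_b) as [k Hk].
    specialize (close k). lra.
Qed.

Definition prepend_orbit (N : Z) (xs : Z -> X) (j : Z) : X :=
  if Z_le_dec N j then xs j else fk (j - N) (xs N).

Definition append_orbit (N : Z) (xs : Z -> X) (j : Z) : X :=
  if Z_le_dec j N then xs j else fk (j - N) (xs N).

Lemma prepend_orbit_agree N xs j : (N <= j)%Z -> prepend_orbit N xs j = xs j.
Proof. intros Hj. unfold prepend_orbit. destruct (Z_le_dec N j); [reflexivity | lia]. Qed.

Lemma append_orbit_agree N xs j : (j <= N)%Z -> append_orbit N xs j = xs j.
Proof. intros Hj. unfold append_orbit. destruct (Z_le_dec j N); [reflexivity | lia]. Qed.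

Lemma prepend_orbit_pseudo_orbit (delta : R) N xs :
  0 < delta ->
  (forall j, (N <= j)%Z -> d (f (xs j)) (xs (j + 1)%Z) < delta) ->
  pseudo_orbit d f delta (prepend_orbit N xs).
Proof.
  intros delta_pos small_jumps j. unfold prepend_orbit.
  destruct (Z_le_dec N j), (Z_le_dec N (j + 1)).
  - apply small_jumps. assumption.
  - lia.
  - rewrite <- iterZ_succ.
    replace (Z.succ (j - N)) with 0%Z by lia. replace (j + 1)%Z with N by lia.
    simpl. rewrite dist_refl. exact delta_pos.
  - rewrite <- iterZ_succ. replace (Z.succ (j - N)) with (j + 1 - N)%Z by lia.
    rewrite dist_refl. exact delta_pos.
Qed.

Lemma append_orbit_pseudo_orbit (delta : R) N xs :
  0 < delta ->
  (forall j, (j < N)%Z -> d (f (xs j)) (xs (j + 1)%Z) < delta) ->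
  pseudo_orbit d f delta (append_orbit N xs).
Proof.
  intros delta_pos small_jumps j. unfold append_orbit.
  destruct (Z_le_dec j N), (Z_le_dec (j + 1) N).
  - apply small_jumps. lia.
  - replace (j + 1 - N)%Z with (Z.succ (j - N)) by lia.
    rewrite iterZ_succ. replace (j - N)%Z with 0%Z by lia. replace j with N by lia.
    simpl. rewrite dist_refl. exact delta_pos.
  - lia.
  - rewrite <- iterZ_succ. replace (Z.succ (j - N)) with (j + 1 - N)%Z by lia.
    rewrite dist_refl. exact delta_pos.
Qed.

Lemma shadowing_close_on_window (c eta delta : R) (M : nat) z xs ys k :
  (forall a b, (forall i, (Z.abs i <= Z.of_nat M)%Z -> d (fk i a) (fk i b) <= c) ->
     d a b < eta / 2) ->
  (forall ys, pseudo_orbit d f delta ys ->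
     exists w, eps_shadows d f g (Rmin (eta / 2) (c / 2)) w ys) ->
  (forall j, d (fk j z) (xs j) < c / 2) ->
  pseudo_orbit d f delta ys ->
  (forall i, (Z.abs (i - k) <= Z.of_nat M)%Z -> ys i = xs i) ->
  d (fk k z) (xs k) < eta.
Proof.
  intros uniform shadowing z_shadows ys_pseudo agree.
  destruct (shadowing ys ys_pseudo) as [w w_shadows].
  assert (w_close : forall j, (Z.abs (j - k) <= Z.of_nat M)%Z ->
            d (fk j w) (xs j) < Rmin (eta / 2) (c / 2)).
  { intros j Hj. rewrite <- agree by exact Hj. apply w_shadows. }
  pose proof (Rmin_l (eta / 2) (c / 2)). pose proof (Rmin_r (eta / 2) (c / 2)).
  assert (zw_close : d (fk k z) (fk k w) < eta / 2).
  { apply uniform. intros i Hi. rewrite !iterZ_add.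
    specialize (z_shadows (i + k)%Z). specialize (w_close (i + k)%Z ltac:(lia)).
    pose proof (ms_tri _ _ d_metric (fk (i + k) z) (xs (i + k)%Z) (fk (i + k) w)).
    pose proof (ms_sym _ _ d_metric (xs (i + k)%Z) (fk (i + k) w)).
    lra. }
  specialize (w_close k ltac:(lia)).
  pose proof (ms_tri _ _ d_metric (fk k z) (fk k w) (xs k)). lra.
Qed.

End ExpansiveShadowing.

Theorem proposition3p2 (X : Type) (d : X -> X -> R) (f g : X -> X) :
  metric_space X d ->
  m_compact d ->
  homeomorphism_with_inverse d f g ->
  expansive d f g ->
  shadowing_property d f g ->
  L_shadowing_property d f g.
Proof.
  intros d_metric d_compact [g_f [f_g [f_cont g_cont]]] [c [c_pos expansive_c]]
    shadowing eps eps_pos.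
  destruct (shadowing (Rmin eps (c / 2))) as [delta [delta_pos shadow]].
  { apply Rmin_pos; lra. }
  exists delta. split; [exact delta_pos|]. intros xs xs_pseudo xs_limit.
  destruct (shadow xs xs_pseudo) as [z z_shadows]. exists z.
  pose proof (Rmin_l eps (c / 2)). pose proof (Rmin_r eps (c / 2)).
  split; [intros k; specialize (z_shadows k); lra|]. intros eta eta_pos.
  destruct (expansive_uniform d f g d_metric d_compact g_f f_g f_cont g_cont
              c (eta / 2) ltac:(lra) expansive_c) as [M uniform].
  destruct (shadowing (Rmin (eta / 2) (c / 2))) as [delta' [delta'_pos shadow']].
  { apply Rmin_pos; lra. }
  destruct (xs_limit delta' delta'_pos) as [N0 small_jumps].
  assert (z_close : forall j, d (iterZ f g j z) (xs j) < c / 2).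
  { intros j. specialize (z_shadows j). lra. }
  set (N := Z.max N0 0).
  exists (N + Z.of_nat M)%Z. intros k Hk.
  destruct (Z_le_dec 0 k).
  - apply (shadowing_close_on_window d f g d_metric g_f f_g c eta delta' M z xs
             (prepend_orbit f g N xs)); auto.
    + apply (prepend_orbit_pseudo_orbit d f g d_metric f_g); [exact delta'_pos|].
      intros j Hj. apply small_jumps. lia.
    + intros i Hi. apply prepend_orbit_agree. lia.
  - apply (shadowing_close_on_window d f g d_metric g_f f_g c eta delta' M z xs
             (append_orbit f g (- N) xs)); auto.
    + apply (append_orbit_pseudo_orbit d f g d_metric f_g); [exact delta'_pos|].
      intros j Hj. apply small_jumps. lia.
    + intros i Hi. apply append_orbit_agree. lia.
Qed.
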